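(* Let $n\geq 2$ and let $t\geq 2$ be even. Then no vertex of $D^*_{n,t}=D_{n,t}\setminus\{1^t\}$ is adjacent to $1^t$ in $S(K_n,t)$.
   Context: For a positive integer $n$ let $[n]=\{1,\dots,n\}$. For positive integers $n,t$, the Sierpiński graph $S(K_n,t)$ is the simple graph with vertex set $[n]^t$ (words $v_1v_2\cdots v_t$ with $v_i\in[n]$), in which $u_1\cdots u_t$ and $v_1\cdots v_t$ are adjacent if and only if there is $s\in[t]$ with $u_j=v_j$ for all $j<s$, $u_s\neq v_s$, and $u_j=v_s$ and $v_j=u_s$ for all $j>s$. Write $a^k$ for the word consisting of $k$ copies of the letter $a$. The sets $D_{n,t}\subseteq[n]^t$ are defined recursively: $D_{n,1}=\{1\}$, $D_{n,2}=\{11,21,\dots,n1\}$. For $t\geq 3$ and $\mathbf v=v_1\cdots v_{t-2}\in D_{n,t-2}$ put $E_1(\mathbf v)=\{v_1\cdots v_{t-2}\alpha\alpha:\alpha\in[n]\}$, $E_2(\mathbf v)=\{v_1\cdots v_{t-3}\alpha\beta v_{t-2}:\alpha,\beta\in[n]\setminus\{v_{t-2}\}\}$, and, if $\mathbf v$ is not a constant word, let $\ell$ be the largest index in $[t-3]$ with $v_\ell\neq v_{\ell+1}$ and put $E_3(\mathbf v)=\{v_1\cdots v_{\ell-1}v_{\ell+1}v_\ell^{\,t-\ell-2}\alpha v_\ell:\alpha\in[n]\setminus\{v_\ell\}\}$. If $t\geq 3$ is odd, $D_{n,t}=E_1(1^{t-2})\cup E_2(1^{t-2})\cup\bigcup_{\mathbf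 v\in D_{n,t-2}\setminus\{1^{t-2}\}}\big(E_1(\mathbf v)\cup E_2(\mathbf v)\cup E_3(\mathbf v)\big)$. If $t\geq 4$ is even, $D_{n,t}=\{1^{t-2}\alpha1:\alpha\in[n]\}\cup\bigcup_{\mathbf v\in D_{n,t-2}\setminus\{1^{t-2}\}}\big(E_1(\mathbf v)\cup E_2(\mathbf v)\cup E_3(\mathbf v)\big)$. (In this recursion $1^{t-2}\in D_{n,t-2}$ is the only constant word in $D_{n,t-2}$, so $E_3$ is applied only to non-constant words.) *)

(* Words over [n] are represented as `seq nat`
   (letters 1..n, positions 0-indexed). *)
From mathcomp Require Import all_boot.
Set Implicit Arguments. Unset Strict Implicit. Unset Printing Implicit Defensive.

Definition is_word (n t : nat) (w : seq nat) : Prop :=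
  size w = t /\ (forall i, i < t -> 1 <= nth 0 w i <= n).

Definition sier_adj (n t : nat) (u v : seq nat) : Prop :=
  is_word n t u /\ is_word n t v /\
  exists s, s < t /\
    (forall j, j < s -> nth 0 u j = nth 0 v j) /\
    nth 0 u s <> nth 0 v s /\
    (forall j, s < j < t -> nth 0 u j = nth 0 v s /\ nth 0 v j = nth 0 u s).

Definition letters (n : nat) : seq nat := iota 1 n.

Definition constant_word (v : seq nat) : bool :=
  all (fun x => x == head 0 v) v.

Definition E1 (n : nat) (v : seq nat) : seq (seq nat) :=
  [seq v ++ [:: a; a] | a <- letters n].

Definition E2 (n : nat) (v : seq nat) : seq (seq nat) :=
  let k := size v in
  let vk := last 0 v in
  [seq take k.-1 v ++ [:: a; b; vk]
     | a <- [seq x <- letters n | x != vk], b <- [seq x <- letters n | x != vk]].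

(* 0-indexed position i = ell - 1 of the largest ell in [k-1] with
   v_ell <> v_{ell+1} (k = size v). *)
Definition last_change (v : seq nat) : nat :=
  last 0 [seq i <- iota 0 (size v).-1 | nth 0 v i != nth 0 v i.+1].

(* E_3(v) = { v_1 ... v_{ell-1} v_{ell+1} v_ell^{t-ell-2} a v_ell : a <> v_ell },
   where t = size v + 2; empty if v is constant (E_3 is only defined for
   non-constant words). In 0-indexed terms with i = ell-1: the power is
   t - ell - 2 = size v - i - 1. *)
Definition E3 (n : nat) (v : seq nat) : seq (seq nat) :=
  if constant_word v then [::] else
  let i := last_change v in
  let vl := nth 0 v i in
  [seq take i v ++ [:: nth 0 v i.+1] ++ nseq (size v - i - 1) vl ++ [:: a; vl]
     | a <- [seq x <- letters n | x != vl]].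

Definition Estep (n : nat) (v : seq nat) : seq (seq nat) :=
  E1 n v ++ E2 n v ++ E3 n v.

(* The sets D_{n,t}, as (possibly repeating) lists; only membership matters. *)
Fixpoint D (n t : nat) {struct t} : seq (seq nat) :=
  match t with
  | 0 => [::]
  | 1 => [:: [:: 1]]
  | t'.+2 =>
      let prev := D n t' in
      let rest := flatten [seq Estep n v | v <- prev & v != nseq t' 1] in
      if t' == 0 then [seq [:: a; 1] | a <- letters n]
      else if odd t then E1 n (nseq t' 1) ++ E2 n (nseq t' 1) ++ rest
      else [seq nseq t' 1 ++ [:: a; 1] | a <- letters n] ++ rest
  end.

From mathcomp Require Import all_boot.
From mathcomp Require Import zify.

(* The neighbours of the constant word 1^t in S(K_n,t) are exactly the words
   1^(t-1) c with c <> 1: at a vertex adjacent to 1^t the swap position s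
   must be the last one, since a later position j would carry the letter
   u_s <> 1 in the word 1^t.  The theorem thus says that for even t no word
   1^(t-1) c with c <> 1 lies in D_{n,t}.  This is proved by induction over
   even t, reading words from the right: a word p x y equals 1^(t-1) c iff
   p = 1^(t-2), x = 1 and y = c.  Words of E_1(v) end in a repeated letter,
   words of E_3(v) and the words 1^(t-2) a 1 end in a letter occurring
   earlier (or in 1), so none of them has this shape; a word of E_2(v) has it
   only if v itself is 1^(t-3) c, which is excluded by induction. *)

Definition ones_then (m c : nat) : seq nat := rcons (nseq m 1) c.

Lemma ones_then_cat2 (p : seq nat) (x y m c : nat) :
  p ++ [:: x; y] = ones_then m.+1 c -> [/\ p = nseq m 1, x = 1 & y = c].
Proof.
move/(congr1 rev); rewrite rev_cat /ones_then rev_rcons rev_nseq /=.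
by case=> -> -> /(congr1 rev); rewrite revK rev_nseq.
Qed.

Lemma adj_ones (n t : nat) (v : seq nat) :
  sier_adj n t v (nseq t 1) -> exists2 c, c != 1 & v = ones_then t.-1 c.
Proof.
move=> [[sv _] [_ [s [hs [hpre [hneq hpost]]]]]].
rewrite nth_nseq hs in hneq.
have hs_last : s = t.-1.
  case: (ltnP s t.-1) => h; last lia.
  have [_] := hpost t.-1 ltac:(lia).
  by rewrite nth_nseq ifT; [move/esym | lia].
exists (nth 0 v s); first exact/eqP.
apply: (@eq_from_nth _ 0); first by rewrite size_rcons size_nseq sv; lia.
move=> j; rewrite sv => hj; rewrite nth_rcons size_nseq.
case: ltnP => hj1.
  by rewrite hpre ?nth_nseq ?hj ?hj1 //; lia.
by rewrite ifT; [congr nth; lia | lia].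
Qed.

(* A word of E_1(v) ends in two equal letters. *)
Lemma ones_then_notin_E1 (n k c : nat) (v : seq nat) :
  c != 1 -> ones_then k.+1 c \notin E1 n v.
Proof.
move=> hc; apply/mapP => -[a _ /esym/ones_then_cat2 [_ -> c1]].
by rewrite -c1 eqxx in hc.
Qed.

Lemma E2_ones_then (n k c : nat) (v : seq nat) :
  ones_then k.+3 c \in E2 n v -> v = ones_then k.+1 c.
Proof.
case/allpairsP => -[a b] /= [_ _].
rewrite -cat1s catA => /esym/ones_then_cat2 [hpre _ <-].
move: hpre; rewrite -addn1 nseqD !cats1.
move/rcons_inj => [htake _].
case/lastP: v htake => [|u z]; first by case: k.
by rewrite size_rcons -cats1 take_size_cat // last_cat /= cats1 => ->.
Qed.

Lemma nonconstant_size (v : seq nat) : ~~ constant_word v -> 2 <= size v.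
Proof. by case: v => [|x [|y s]] //; rewrite /constant_word /= eqxx. Qed.

(* For a word of size at least 2, the last change position is not the last
   position, so the block v_l^(t-l-2) in the definition of E_3 is nonempty. *)
Lemma last_change_lt (v : seq nat) : 2 <= size v -> last_change v < (size v).-1.
Proof.
move=> hv; rewrite /last_change.
set changes := [seq i <- _ | _].
have := mem_last 0 changes; rewrite inE => /orP [/eqP -> | ]; first lia.
by rewrite mem_filter mem_iota add0n => /andP [_ /andP [_]].
Qed.

(* A word of E_3(v) ends in the letter v_l, which also occurs before. *)
Lemma ones_then_notin_E3 (n k c : nat) (v : seq nat) :
  c != 1 -> ones_then k.+1 c \notin E3 n v.
Proof.
move=> hc; rewrite /E3; case: ifPn => // /nonconstant_size /last_change_lt hv.
apply/mapP => -[a _]; rewrite !catA.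
move=> /esym/ones_then_cat2 [hpre _ hlast].
set vl := nth 0 v (last_change v) in hpre hlast.
have : vl \in nseq k 1.
  by rewrite -hpre mem_cat mem_nseq eqxx andbT; apply/orP; right; lia.
by rewrite mem_nseq => /andP [_ /eqP vl1]; rewrite -hlast vl1 eqxx in hc.
Qed.

Lemma Estep_ones_then (n k c : nat) (v : seq nat) :
  c != 1 -> ones_then k.+3 c \in Estep n v -> v = ones_then k.+1 c.
Proof.
move=> hc; rewrite /Estep !mem_cat (negbTE (@ones_then_notin_E1 n k.+2 c v hc)).
by rewrite (negbTE (@ones_then_notin_E3 n k.+2 c v hc)) orbF => /E2_ones_then.
Qed.

Lemma D_even_step (n m : nat) : ~~ odd m ->
  D n m.+4 = [seq nseq m.+2 1 ++ [:: a; 1] | a <- letters n] ++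
             flatten [seq Estep n v | v <- D n m.+2 & v != nseq m.+2 1].
Proof.
move=> hev; have odd_m4 : odd m.+4 = false by rewrite /= !negbK (negbTE hev).
by rewrite -[D n m.+4]/(if odd m.+4 then _ ++ _ ++ _ else _ ++ _) odd_m4.
Qed.

Lemma ones_then_notin_D (n m c : nat) :
  ~~ odd m -> c != 1 -> ones_then m.+1 c \notin D n m.+2.
Proof.
move=> + hc; elim/ltn_ind: m => -[|[|m]] IH // hev.
  apply/mapP => -[a _ /esym].
  rewrite -[[:: a; 1]]/([::] ++ [:: a; 1]) => /ones_then_cat2 [_ _ c1].
  by rewrite c1 eqxx in hc.
rewrite /= negbK in hev; rewrite D_even_step // mem_cat negb_or.
apply/andP; split.
  apply/mapP => -[a _ /esym/ones_then_cat2 [_ _ c1]].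
  by rewrite c1 eqxx in hc.
apply/flatten_mapP => -[v]; rewrite mem_filter => /andP [_ hv].
move/(@Estep_ones_then n m c v hc) => hv_eq.
by move: hv; rewrite hv_eq; apply/negP/IH.
Qed.

Theorem mainTheorem9 (n t : nat) (hn : 2 <= n) (ht : 2 <= t) (hev : ~~ odd t) :
  forall v : seq nat, v \in D n t -> v != nseq t 1 -> ~ sier_adj n t v (nseq t 1).
Proof.
move=> v hv _ /adj_ones [c hc hv_eq].
case: t ht hev hv hv_eq => [|[|m]] // _ hev hv hv_eq.
rewrite /= negbK in hev.
by move: hv; rewrite hv_eq; apply/negP/ones_then_notin_D.
Qed.
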